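(* Let $N\ge 1$, $r\in\{1,\dots,N\}$, $m\ge 2$ an integer, and $\alpha\in\mathbb{C}^{N\times N}$ (independent of $\epsilon$). Let $\beta_{m-1},\beta_m$ be $N\times N$ matrix-valued asymptotic expansions in a small parameter $\epsilon\to 0$ of the form $$\beta_{m-1}=\beta_{m-1,0}+\beta_{m-1,1}\epsilon+O(\epsilon^2),\qquad \beta_m=\beta_{m,0}+\beta_{m,1}\epsilon+O(\epsilon^2),\qquad \beta_{m-1,i},\beta_{m,i}\in\mathbb{C}^{N\times N},$$ where all entries in the first $r$ rows of $\beta_{m,0}$ vanish, and $\det\beta_m=O(\epsilon^{r})$. Define $\beta_{m+1},\beta_{m+2},\beta_{m+3},\beta_{m+4}$ by the matrix discrete Painlevé I recursion $$\beta_{n+1}=n\beta_n^{-1}-\beta_{n-1}-\beta_n-\alpha .$$ Assume that, as $\epsilon\to0$, $$\det\beta_{m+1}=O(\epsilon^{-r}),\quad \det\beta_{m+2}=O(\epsilon^{-r}),\quad \det\beta_{m+3}=O(\epsilon^{r}),\quad \det\beta_{m+4}=O(1).$$ Then the singularity is confined with confinement time $4$: $\beta_{m+4}=O(1)$ as $\epsilon\to0$, i.e. $\beta_{m+4}$ has an asymptotic expansion with no negative powers of $\epsilon$ (and, by the hypothesis on its determinant, it is invertible at $\epsilon=0$), so that neither poles nor zeros persist at step $m+4$.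
   Context: All expansions are formal/asymptotic expansions in powers of $\epsilon$ with matrix coefficients; inverses are taken in the ring of such (Laurent) expansions. A condition $\det X=O(\epsilon^{k})$ is understood in the paper's sense of exact order: $\det X=c\,\epsilon^{k}+O(\epsilon^{k+1})$ with $c\neq0$. The confinement time is the minimum number of iterations of the recursion, after the appearance of a zero (a matrix $\beta_m$ with singular leading coefficient), needed to recover a matrix expansion with neither poles (negative powers of $\epsilon$) nor zeros (vanishing determinant at $\epsilon=0$). *)

From HB Require Import structures.
From mathcomp Require Import all_boot all_order all_algebra.
From mathcomp Require Import complex.
From mathcomp Require Import zify.
From mathcomp Require Import boolp classical_sets functions reals Rstruct.

Set Implicit Arguments.
Unset Strict Implicit.
Unset Printing Implicit Defensive.

Import Order.TTheory GRing.Theory Num.Theory.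
Local Open Scope ring_scope.

Definition C : numClosedFieldType := complex Rdefinitions.R.

Definition fps := nat -> C.
HB.instance Definition _ := GRing.Zmodule.on fps.

Definition fps_one : fps := fun n => (n == 0%N)%:R.
Definition fps_mul (f g : fps) : fps :=
  fun n => \sum_(i < n.+1) f i * g (n - i)%N.

Definition fps_tr (k : nat) (f : fps) : {poly C} := \poly_(i < k) f i.

Lemma fps_trE k f i : (fps_tr k f)`_i = if (i < k)%N then f i else 0.
Proof. by rewrite /fps_tr coef_poly. Qed.

Lemma fps_mulE f g n k : (n < k)%N -> fps_mul f g n = (fps_tr k f * fps_tr k g)`_n.
Proof.
move=> nk; rewrite coefM /fps_mul; apply: eq_bigr => i _.
rewrite !fps_trE; have io := ltn_ord i.
rewrite (leq_ltn_trans _ nk) ?(leq_ltn_trans _ nk) //; first exact: leq_subr.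
Qed.

Lemma coef_mul_agree (p p' q : {poly C}) n :
  (forall j, (j <= n)%N -> p`_j = p'`_j) -> (p * q)`_n = (p' * q)`_n.
Proof.
move=> h; rewrite !coefM; apply: eq_bigr => i _; rewrite h //.
by rewrite -ltnS.
Qed.

Lemma fps_mulA : associative fps_mul.
Proof.
move=> f g h; apply/funext => n.
set F := fps_tr n.+1 f; set G := fps_tr n.+1 g; set H := fps_tr n.+1 h.
have agree u v : forall j, (j <= n)%N ->
    (fps_tr n.+1 (fps_mul u v))`_j = (fps_tr n.+1 u * fps_tr n.+1 v)`_j.
  by move=> j jn; rewrite fps_trE ltnS jn; apply: fps_mulE; rewrite ltnS.
rewrite (fps_mulE _ _ (ltnSn n)) [RHS](fps_mulE _ _ (ltnSn n)).
rewrite (coef_mul_agree _ (agree f g)).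
rewrite [fps_tr _ f * _]mulrC.
rewrite (coef_mul_agree _ (agree g h)) -/F -/G -/H.
by have -> : G * H * F = F * G * H by rewrite mulrC mulrA.
Qed.

Lemma fps_mulC : commutative fps_mul.
Proof.
move=> f g; apply/funext => n.
by rewrite !(fps_mulE _ _ (ltnSn n)) mulrC.
Qed.

Lemma fps_mul1 : left_id fps_one fps_mul.
Proof.
move=> f; apply/funext => n; rewrite (fps_mulE _ _ (ltnSn n)).
have -> : fps_tr n.+1 fps_one = 1.
  apply/polyP => i; rewrite fps_trE coefC /fps_one.
  by case: i => [|i] //=; case: ifP.
by rewrite mul1r fps_trE ltnSn.
Qed.

Lemma fps_mulDl : left_distributive fps_mul +%R.
Proof.
move=> f g h; apply/funext => n.
have -> : (fps_mul f h + fps_mul g h) n = fps_mul f h n + fps_mul g h n by [].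
rewrite !(fps_mulE _ _ (ltnSn n)).
have -> : fps_tr n.+1 (f + g) = fps_tr n.+1 f + fps_tr n.+1 g.
  by apply/polyP => i; rewrite coefD !fps_trE; case: ifP; rewrite ?addr0.
by rewrite mulrDl coefD.
Qed.

Lemma fps_one_neq0 : fps_one != 0.
Proof.
apply/eqP => h; have := congr1 (fun f : fps => f 0%N) h.
by rewrite /fps_one /= => /eqP; rewrite oner_eq0.
Qed.

HB.instance Definition _ := GRing.Zmodule_isComNzRing.Build fps
  fps_mulA fps_mulC fps_mul1 fps_mulDl fps_one_neq0.

Definition fps_unit : {pred fps} := fun x => `[< exists y : fps, y * x = 1 >].
Definition fps_inv (x : fps) : fps :=
  match pselect (exists y : fps, y * x = 1) with
  | left h => projT1 (cid h)
  | right _ => x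
  end.


Lemma fps_mulVx : {in fps_unit, left_inverse 1 fps_inv *%R}.
Proof.
move=> x hx; have {}hx : exists y, y * x = 1 by exact/asboolP.
rewrite /fps_inv; case: pselect => [h|nh]; first exact: (projT2 (cid h)).
by exfalso; apply: nh.
Qed.

Lemma fps_unitPl (x y : fps) : y * x = 1 -> fps_unit x.
Proof. by move=> h; apply/asboolP; exists y. Qed.

Lemma fps_invr_out : {in [predC fps_unit], fps_inv =1 id}.
Proof.
move=> x hx; have {}hx : ~ exists y, y * x = 1.
  by move=> h; move: hx; rewrite inE /=; apply/negP/negPn; apply/asboolP.
by rewrite /fps_inv; case: pselect.
Qed.

HB.instance Definition _ := GRing.ComNzRing_hasMulInverse.Build fps
  fps_mulVx fps_unitPl fps_invr_out.

Lemma fps_mul_coef (f g : fps) n : (f * g) n = \sum_(i < n.+1) f i * g (n - i)%N.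
Proof. by []. Qed.

Lemma fps_neq0 (f : fps) : f != 0 -> exists i, f i != 0.
Proof.
move=> /eqP hf; apply: contrapT => hn; apply: hf; apply/funext => i /=.
by apply/eqP; apply: contrapT => hi; apply: hn; exists i; apply/negP.
Qed.

Lemma fps_integral : GRing.integral_domain_axiom fps.
Proof.
move=> x y hxy; case: (eqVneq x 0) => //= hx; case: (eqVneq y 0) => //= hy.
exfalso.
have [i0 hi0] := fps_neq0 hx; have [j0 hj0] := fps_neq0 hy.
have ex1 : exists i, x i != 0 by exists i0.
have ex2 : exists j, y j != 0 by exists j0.
case: (ex_minnP ex1) => i xi imin; case: (ex_minnP ex2) => j yj jmin.
have := congr1 (fun f : fps => f (i + j)%N) hxy => /=.
rewrite fps_mul_coef.
have ii : (i < (i + j).+1)%N by rewrite ltnS leq_addr.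
rewrite (bigD1 (Ordinal ii)) //= big1 ?addr0 ?addnK.
  move=> /eqP; rewrite mulf_eq0 (negPf xi) /=.
  by apply/negP; rewrite addKn.
move=> k /eqP nk.
have nk' : (nat_of_ord k != i) by apply/eqP => e; apply: nk; apply: val_inj.
case: (ltngtP k i) => [lki|lik|eki]; last by rewrite eki eqxx in nk'.
  have : x k == 0 by apply: contraLR lki => /imin; rewrite -leqNgt.
  by move=> /eqP ->; rewrite mul0r.
have hlt : ((i + j) - k < j)%N.
  have := ltn_ord k; rewrite ltnS => hk; lia.
have : y ((i + j) - k)%N == 0.
  by apply: contraLR hlt => /jmin; rewrite -leqNgt.
by move=> /eqP ->; rewrite mulr0.
Qed.

HB.instance Definition _ := GRing.ComUnitRing_isIntegral.Build fps fps_integral.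

(* The field C((eps)) of formal Laurent series, as the fraction field of
   C[[eps]]. *)
Notation LS := {fraction fps}.
Notation "x %:F" := (@FracField.tofrac fps x).

Definition fps_X : fps := fun n => (n == 1%N)%:R.
Definition fps_const (a : C) : fps := fun n => if n == 0%N then a else 0.
Definition eps : LS := (fps_X)%:F.

Definition exact_order (x : LS) (k : int) : Prop :=
  exists u : fps, u 0%N != 0 /\ x = u%:F * eps ^ k.

Definition lift_mx (N : nat) (A : 'M[fps]_N) : 'M[LS]_N := map_mx (fun f : fps => f%:F) A.

Definition const_lmx (N : nat) (A : 'M[C]_N) : 'M[LS]_N :=
  map_mx (fun a : C => (fps_const a)%:F) A.

Definition coef0_mx (N : nat) (A : 'M[fps]_N) : 'M[C]_N := map_mx (fun f : fps => f 0%N) A.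

Definition dPI_next (N : nat) (alpha : 'M[C]_N) (n : nat) (bprev bcur : 'M[LS]_N)
  : 'M[LS]_N :=
  n%:R *: invmx bcur - bprev - bcur - const_lmx alpha.

From HB Require Import structures.
From mathcomp Require Import all_boot all_order all_algebra.
From mathcomp Require Import complex.
From mathcomp Require Import boolp classical_sets functions reals Rstruct.
Import Order.TTheory GRing.Theory Num.Theory.
Local Open Scope ring_scope.

(* Write [beta_m = D M] with [D = diag(eps, ..., eps, 1, ..., 1)] ([r] entries [eps]); as
   [det beta_m] has exact order [r], the power-series matrix [M] is invertible. The recursion
   gives [beta_{m+1} = M^-1 G1 D^-1], [beta_{m+2} = M^-1 G2 D^-1] and [beta_{m+3} = D Z] with
   power-series matrices [G1], [G2], [Z], which the determinant hypotheses make invertible, and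
   then [beta_{m+4} = Y D^-1 - (D Z + alpha)] with [Y = (m+3) Z^-1 - M^-1 G2]. At [eps = 0] the
   matrix [D] kills the first [r] coordinates, on which [G1] and [G2] therefore act as [m] and
   [-m]; this makes [Y(0)] vanish there, so the first [r] columns of [Y] are divisible by [eps]
   and [beta_{m+4}] has no pole. *)

Section FpsInverse.
Variable f : fps.
Let a : C := (f 0%N)^-1.

Fixpoint finv_seq (n : nat) : seq C :=
  if n is n'.+1 then
    let s := finv_seq n' in rcons s (- a * \sum_(i < n'.+1) f i.+1 * nth 0 s (n' - i)%N)
  else [:: a].

Lemma size_finv_seq n : size (finv_seq n) = n.+1.
Proof. by elim: n => //= n ih; rewrite size_rcons ih. Qed.

Lemma nth_finv_seq n k : (k <= n)%N -> nth 0 (finv_seq n) k = nth 0 (finv_seq k) k.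
Proof.
elim: n => [|n ih]; first by rewrite leqn0 => /eqP ->.
rewrite leq_eqVlt => /orP [/eqP -> //|]; rewrite ltnS => kn.
by rewrite /= nth_rcons size_finv_seq ltnS kn ih.
Qed.

Definition finv : fps := fun n => nth 0 (finv_seq n) n.

Lemma finvS n : finv n.+1 = - a * \sum_(i < n.+1) f i.+1 * finv (n - i)%N.
Proof.
rewrite /finv /= nth_rcons size_finv_seq ltnn eqxx; congr (_ * _).
by apply: eq_bigr => i _; rewrite nth_finv_seq // leq_subr.
Qed.

Lemma mulf_finv : f 0%N != 0 -> f * finv = 1.
Proof.
move=> f0; apply/funext => -[|n]; rewrite fps_mul_coef.
  by rewrite big_ord1 /finv /= /a divff.
rewrite big_ord_recl /= subn0 finvS mulrA mulrN /a divff // mulN1r.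
rewrite [RHS]/= addrC; apply/eqP; rewrite subr_eq0; apply/eqP.
by apply: eq_bigr => i _; rewrite subSS.
Qed.

End FpsInverse.

Definition coef0 (f : fps) : C := f 0%N.

Lemma coef0_is_zmod_morphism : zmod_morphism coef0. Proof. by []. Qed.
HB.instance Definition _ := GRing.isZmodMorphism.Build fps C coef0 coef0_is_zmod_morphism.

Lemma coef0_is_monoid_morphism : monoid_morphism coef0.
Proof. by split => // f g; rewrite /coef0 fps_mul_coef big_ord1. Qed.
HB.instance Definition _ := GRing.isMonoidMorphism.Build fps C coef0 coef0_is_monoid_morphism.

Lemma fps_unitE (f : fps) : (f \is a GRing.unit) = (f 0%N != 0).
Proof.
apply/idP/idP => [uf | f0]; first by rewrite -unitfE; exact: (rmorph_unit coef0 uf).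
by apply/unitrP; exists (finv f); rewrite mulrC mulf_finv.
Qed.

Lemma coef0_mxE n (A : 'M[fps]_n) : coef0_mx A = map_mx coef0 A.
Proof. by []. Qed.

Lemma unitmx_fpsE n (A : 'M[fps]_n) : (A \in unitmx) = (\det (coef0_mx A) != 0).
Proof. by rewrite unitmxE fps_unitE coef0_mxE det_map_mx. Qed.

Lemma eps_neq0 : eps != 0.
Proof.
rewrite tofrac_eq0; apply/eqP => /(congr1 (fun f : fps => f 1%N)) /eqP.
by rewrite oner_eq0.
Qed.

Lemma exact_order_unitmx n (A : 'M[fps]_n) (k : int) :
  exact_order ((\det A)%:F * eps ^ k) k -> A \in unitmx.
Proof.
move=> [u [u0 e]]; rewrite unitmxE fps_unitE.
suff -> : \det A = u by [].
apply/eqP; rewrite -tofrac_eq; apply/eqP.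
exact: (mulIf (expfz_neq0 _ eps_neq0) e).
Qed.

Lemma mulmx1_invmx (R : comUnitRingType) n (A B : 'M[R]_n) : A *m B = 1%:M -> invmx A = B.
Proof.
move=> AB1; have [uA _] := mulmx1_unit AB1.
by rewrite -[invmx A]mulmx1 -AB1 mulKmx.
Qed.

Lemma invmxM (R : comUnitRingType) n (A B : 'M[R]_n) :
  A \in unitmx -> B \in unitmx -> invmx (A *m B) = invmx B *m invmx A.
Proof.
move=> uA uB; apply: mulmx1_invmx.
by rewrite -mulmxA (mulmxA B) (mulmxV uB) mul1mx (mulmxV uA).
Qed.

Section MapUnitMatrix.
Variables (R S : comUnitRingType) (f : {rmorphism R -> S}) (n : nat).
Implicit Types A : 'M[R]_n.

Lemma unitmx_map A : A \in unitmx -> map_mx f A \in unitmx.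
Proof. by rewrite !unitmxE det_map_mx; exact: rmorph_unit. Qed.

Lemma map_invmx_unit A : A \in unitmx -> map_mx f (invmx A) = invmx (map_mx f A).
Proof. by move=> uA; apply/esym/mulmx1_invmx; rewrite -map_mxM mulmxV // map_mx1. Qed.

End MapUnitMatrix.

Section Lift.
Context {n : nat}.
Implicit Types A B : 'M[fps]_n.

Lemma lift_mxD A B : lift_mx (A + B) = lift_mx A + lift_mx B. Proof. exact: map_mxD. Qed.
Lemma lift_mxB A B : lift_mx (A - B) = lift_mx A - lift_mx B. Proof. exact: map_mxB. Qed.
Lemma lift_mxM A B : lift_mx (A *m B) = lift_mx A *m lift_mx B. Proof. exact: map_mxM. Qed.
Lemma lift_mxZn (k : nat) A : lift_mx (k%:R *: A) = k%:R *: lift_mx A.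
Proof. by rewrite /lift_mx map_mxZ rmorph_nat. Qed.
Lemma det_lift_mx A : \det (lift_mx A) = (\det A)%:F. Proof. exact: det_map_mx. Qed.

Lemma unitmx_lift A : A \in unitmx -> lift_mx A \in unitmx.
Proof. exact: unitmx_map. Qed.

Lemma invmx_lift_mx A : A \in unitmx -> invmx (lift_mx A) = lift_mx (invmx A).
Proof. by move=> uA; rewrite -map_invmx_unit. Qed.

Lemma const_lmxE (A : 'M[C]_n) : const_lmx A = lift_mx (map_mx fps_const A).
Proof. by apply/matrixP => i j; rewrite !mxE. Qed.

End Lift.

Section Coef0.
Context {n : nat}.
Implicit Types A B : 'M[fps]_n.

Lemma coef0_mxD A B : coef0_mx (A + B) = coef0_mx A + coef0_mx B.
Proof. by rewrite !coef0_mxE map_mxD. Qed.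
Lemma coef0_mxB A B : coef0_mx (A - B) = coef0_mx A - coef0_mx B.
Proof. by rewrite !coef0_mxE map_mxB. Qed.
Lemma coef0_mxM A B : coef0_mx (A *m B) = coef0_mx A *m coef0_mx B.
Proof. by rewrite !coef0_mxE map_mxM. Qed.
Lemma coef0_mxZn (k : nat) A : coef0_mx (k%:R *: A) = k%:R *: coef0_mx A.
Proof. by rewrite coef0_mxE map_mxZ rmorph_nat. Qed.
Lemma coef0_mx1 : coef0_mx (1%:M : 'M[fps]_n) = 1%:M.
Proof. by rewrite !coef0_mxE map_mx1. Qed.

Lemma unitmx_coef0 A : A \in unitmx -> coef0_mx A \in unitmx.
Proof. by rewrite coef0_mxE; exact: unitmx_map. Qed.

Lemma coef0_invmx A : A \in unitmx -> coef0_mx (invmx A) = invmx (coef0_mx A).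
Proof. by rewrite !coef0_mxE; exact: map_invmx_unit. Qed.

End Coef0.

Definition fshift (g : fps) : fps := fun n => g n.+1.

Lemma fps_X_mul_fshift (g : fps) : g 0%N = 0 -> fps_X * fshift g = g.
Proof.
move=> g0; apply/funext => -[|n]; rewrite fps_mul_coef.
  by rewrite big_ord1 g0 /fps_X /= mul0r.
rewrite big_ord_recl big_ord_recl big1 ?addr0 => [|i _]; last by rewrite /fps_X /= mul0r.
by rewrite /fps_X /= mul0r mul1r add0r /fshift subn1.
Qed.

Section EpsDiag.
Variables (N r : nat).
Hypothesis r_le_N : (r <= N)%N.
Implicit Types A : 'M[fps]_N.

Definition eps_diag : 'M[fps]_N := diag_mx (\row_(i < N) if (i < r)%N then fps_X else 1).
Local Notation D := eps_diag.
Local Notation E := (invmx (lift_mx D)).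

Lemma det_lift_eps_diag : \det (lift_mx D) = eps ^+ r.
Proof.
rewrite det_lift_mx det_diag; under eq_bigr do rewrite mxE.
rewrite -big_mkcond /= -(big_ord_widen _ (fun _ => fps_X) r_le_N).
by rewrite prodr_const card_ord rmorphXn.
Qed.

Lemma unitmx_lift_eps_diag : lift_mx D \in unitmx.
Proof. by rewrite unitmxE det_lift_eps_diag unitfE expf_neq0 // eps_neq0. Qed.

Lemma det_lift_mulE A : \det (lift_mx A *m E) = (\det A)%:F * eps ^ (- r%:Z).
Proof. by rewrite det_mulmx det_inv det_lift_mx det_lift_eps_diag exprnN. Qed.

Lemma det_lift_eps_diag_mul A : \det (lift_mx (D *m A)) = (\det A)%:F * eps ^ r%:Z.
Proof. by rewrite lift_mxM det_mulmx det_lift_eps_diag det_lift_mx mulrC. Qed.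

Lemma lift_mul_eps_diagK A : lift_mx (A *m D) *m E = lift_mx A.
Proof. by rewrite lift_mxM mulmxK // unitmx_lift_eps_diag. Qed.

Lemma invmx_lift_mulE A : A \in unitmx -> invmx (lift_mx A *m E) = lift_mx (D *m invmx A).
Proof.
move=> uA; rewrite invmxM ?unitmx_inv ?unitmx_lift_eps_diag ?unitmx_lift //.
by rewrite invmxK lift_mxM (invmx_lift_mx _ uA).
Qed.

Lemma invmx_lift_eps_diag_mul A :
  A \in unitmx -> invmx (lift_mx (D *m A)) = lift_mx (invmx A) *m E.
Proof.
move=> uA; rewrite lift_mxM invmxM ?unitmx_lift_eps_diag ?unitmx_lift //.
by rewrite (invmx_lift_mx _ uA).
Qed.

(* Divides the first [r] rows by [eps]; this is exact only when they vanish at [eps = 0]. *)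
Definition div_rows (A : 'M[fps]_N) : 'M[fps]_N :=
  \matrix_(i, j) if (i < r)%N then fshift (A i j) else A i j.

Lemma eps_diag_div_rows A :
  (forall i j : 'I_N, (i < r)%N -> A i j 0%N = 0) -> D *m div_rows A = A.
Proof.
move=> A0; apply/matrixP => i j; rewrite mul_diag_mx !mxE.
by case: ifP => ir; rewrite ?mul1r ?fps_X_mul_fshift ?A0.
Qed.

Lemma div_cols_eps_diag A :
  (forall i j : 'I_N, (j < r)%N -> A i j 0%N = 0) -> (div_rows A^T)^T *m D = A.
Proof.
move=> A0; rewrite -[D]tr_diag_mx -trmx_mul eps_diag_div_rows ?trmxK //.
by move=> i j; rewrite mxE; exact: A0.
Qed.

Definition head_proj : 'M[C]_N := diag_mx (\row_(i < N) (i < r)%N%:R).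

Lemma coef0_eps_diag_head_proj : coef0_mx D *m head_proj = 0.
Proof.
apply/matrixP => i j; rewrite mul_mx_diag !mxE.
case: (eqVneq i j) => [->|_]; last by rewrite mulr0n mul0r.
by case: (j < r)%N; rewrite mulr1n ?mulr1 ?mulr0.
Qed.

Lemma coef0_cols_head_proj A :
  coef0_mx A *m head_proj = 0 -> forall i j : 'I_N, (j < r)%N -> A i j 0%N = 0.
Proof.
move=> /matrixP A0 i j jr; have := A0 i j.
by rewrite mul_mx_diag !mxE jr mulr1.
Qed.

End EpsDiag.

(* Used at [eps = 0]: [mu], [g1], [g2], [z] are the values there of [M], [G1], [G2], [Z] below,
   and [p] is [head_proj]. *)
Lemma dPI_constant_identity {F : fieldType} {n} {k : nat} {p mu g1 g2 z : 'M[F]_n} :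
  k%:R != 0 :> F -> mu \in unitmx -> g1 \in unitmx -> g2 \in unitmx -> z \in unitmx ->
  g1 *m p = k%:R *: p -> g2 *m p = - (k%:R *: p) ->
  z = mu + k.+2%:R *: (invmx g2 *m mu) - k.+1%:R *: (invmx g1 *m mu) ->
  (k.+3%:R *: invmx z - invmx mu *m g2) *m p = 0.
Proof.
move=> k0 umu ug1 ug2 uz g1p g2p ez.
have g1ip : invmx g1 *m p = k%:R^-1 *: p.
  have e : g1 *m (k%:R^-1 *: p) = p by rewrite -scalemxAr g1p scalerA mulVf // scale1r.
  by rewrite -{1}e (mulKmx ug1).
have zg2p : z *m invmx mu *m g2 *m p = k.+3%:R *: p.
  rewrite ez !(mulmxDl, mulmxBl, mulNmx) -!scalemxAl (mulmxV umu) !(mulmxK umu) mul1mx.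
  rewrite (mulVmx ug2) mul1mx -mulmxA g2p mulmxN -scalemxAr g1ip scalerA mulfV //.
  rewrite scale1r scalerN opprK -scaleNr -!scalerDl.
  by rewrite -[k.+2]addn2 natrD addKr -natrD addnC addSn.
apply: (can_inj (mulKmx uz)); rewrite mulmx0 mulmxA mulmxBr -scalemxAr (mulmxV uz).
by rewrite mulmxBl scalemx1 mul_scalar_mx !mulmxA zg2p subrr.
Qed.

Section Confinement.
Variables (N r m : nat) (alpha : 'M[C]_N) (Bm1 Bm : 'M[fps]_N).
Hypothesis r_le_N : (r <= N)%N.
Hypothesis m_gt0 : (0 < m)%N.
Hypothesis Bm_rows0 : forall i j : 'I_N, (i < r)%N -> coef0_mx Bm i j = 0.
Hypothesis det_Bm : exact_order (\det (lift_mx Bm)) r%:Z.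

Local Notation D := (eps_diag N r).
Local Notation E := (invmx (lift_mx D)).
Local Notation b1 := (dPI_next alpha m (lift_mx Bm1) (lift_mx Bm)).
Local Notation b2 := (dPI_next alpha m.+1 (lift_mx Bm) b1).
Local Notation b3 := (dPI_next alpha m.+2 b1 b2).
Local Notation b4 := (dPI_next alpha m.+3 b2 b3).

Let Al : 'M[fps]_N := map_mx fps_const alpha.
Let M : 'M[fps]_N := div_rows N r Bm.
Let G1 : 'M[fps]_N := m%:R *: 1%:M - M *m (Bm1 + Bm + Al) *m D.
Let H1 : 'M[fps]_N := m.+1%:R *: (D *m invmx G1 *m M) - Bm - Al.
Let G2 : 'M[fps]_N := M *m H1 *m D - G1.
Let Z : 'M[fps]_N := M + m.+2%:R *: (invmx G2 *m M) - m.+1%:R *: (invmx G1 *m M).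
Let Y : 'M[fps]_N := m.+3%:R *: invmx Z - invmx M *m G2.

Lemma Bm_factor : Bm = D *m M.
Proof. by rewrite eps_diag_div_rows // => i j /(Bm_rows0 _ j); rewrite coef0_mxE mxE. Qed.

Lemma M_unit : M \in unitmx.
Proof. by apply: (@exact_order_unitmx _ _ r); rewrite -det_lift_eps_diag_mul // -Bm_factor. Qed.

Lemma pole_form_unit G : exact_order (\det (lift_mx (invmx M *m G) *m E)) (- r%:Z) ->
  G \in unitmx.
Proof.
rewrite det_lift_mulE // => /exact_order_unitmx.
by rewrite unitmx_mul => /andP[_].
Qed.

Lemma invmx_pole_form G : G \in unitmx ->
  invmx (lift_mx (invmx M *m G) *m E) = lift_mx (D *m invmx G *m M).
Proof.
move=> uG; rewrite invmx_lift_mulE ?unitmx_mul ?unitmx_inv ?M_unit //.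
by rewrite invmxM ?unitmx_inv ?M_unit // invmxK mulmxA.
Qed.

Lemma b1E : b1 = lift_mx (invmx M *m G1) *m E.
Proof.
have -> : invmx M *m G1 = m%:R *: invmx M - (Bm1 + Bm + Al) *m D.
  by rewrite mulmxBr -scalemxAr mulmx1 !mulmxA (mulVmx M_unit) mul1mx.
rewrite lift_mxB lift_mxZn mulmxBl lift_mul_eps_diagK // -scalemxAl.
rewrite -invmx_lift_eps_diag_mul ?M_unit // -Bm_factor /dPI_next const_lmxE !lift_mxD.
by rewrite !opprD !addrA.
Qed.

Hypothesis det_b1 : exact_order (\det b1) (- r%:Z).

Lemma G1_unit : G1 \in unitmx.
Proof. by apply: pole_form_unit; rewrite -b1E. Qed.

Lemma b2_H1 : b2 = lift_mx H1 - b1.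
Proof.
rewrite {1}/dPI_next b1E invmx_pole_form ?G1_unit // -b1E const_lmxE.
by rewrite /H1 !lift_mxB lift_mxZn addrAC.
Qed.

Lemma b2E : b2 = lift_mx (invmx M *m G2) *m E.
Proof.
have -> : invmx M *m G2 = H1 *m D - invmx M *m G1.
  by rewrite /G2 mulmxBr !mulmxA (mulVmx M_unit) mul1mx.
by rewrite b2_H1 [in RHS]lift_mxB mulmxBl lift_mul_eps_diagK // -b1E.
Qed.

Hypothesis det_b2 : exact_order (\det b2) (- r%:Z).

Lemma G2_unit : G2 \in unitmx.
Proof. by apply: pole_form_unit; rewrite -b2E. Qed.

Lemma b3E : b3 = lift_mx (D *m Z).
Proof.
rewrite {1}/dPI_next b2E invmx_pole_form ?G2_unit // -b2E b2_H1.
move: (b1) => b; rewrite opprB subrKA.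
rewrite const_lmxE -lift_mxZn -!lift_mxB; congr lift_mx.
rewrite /H1 /Z Bm_factor !(mulmxDr, mulmxN) -!scalemxAr !mulmxA.
by rewrite !opprD !opprK !addrA addrK addrC addrA.
Qed.

Hypothesis det_b3 : exact_order (\det b3) r%:Z.

Lemma Z_unit : Z \in unitmx.
Proof. by apply: (@exact_order_unitmx _ _ r); rewrite -det_lift_eps_diag_mul // -b3E. Qed.

Lemma b4E : b4 = lift_mx Y *m E - lift_mx (D *m Z + Al).
Proof.
rewrite b3E b2E /dPI_next invmx_lift_eps_diag_mul ?Z_unit // const_lmxE.
rewrite [in RHS]lift_mxB lift_mxZn [in RHS]lift_mxD mulmxBl -scalemxAl.
by rewrite opprD addrA.
Qed.

Lemma coef0_Y_head_proj : coef0_mx Y *m head_proj N r = 0.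
Proof.
have DP0 := coef0_eps_diag_head_proj N r.
have G1P : coef0_mx G1 *m head_proj N r = m%:R *: head_proj N r.
  rewrite /G1 coef0_mxB coef0_mxZn coef0_mx1 !coef0_mxM mulmxBl -!mulmxA DP0.
  by rewrite !mulmx0 subr0 scalemx1 mul_scalar_mx.
have G2P : coef0_mx G2 *m head_proj N r = - (m%:R *: head_proj N r).
  by rewrite /G2 coef0_mxB !coef0_mxM mulmxBl -!mulmxA DP0 !mulmx0 sub0r G1P.
rewrite /Y coef0_mxB coef0_mxZn coef0_mxM !coef0_invmx ?Z_unit ?M_unit //.
apply: (dPI_constant_identity _ _ _ _ _ G1P G2P);
  rewrite ?pnatr_eq0 -?lt0n ?unitmx_coef0 ?M_unit ?G1_unit ?G2_unit ?Z_unit //.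
by rewrite /Z coef0_mxB coef0_mxD !coef0_mxZn !coef0_mxM !coef0_invmx ?G1_unit ?G2_unit.
Qed.

Hypothesis det_b4 : exact_order (\det b4) 0.

Lemma dPI_confinement : exists B4 : 'M[fps]_N, b4 = lift_mx B4 /\ \det (coef0_mx B4) != 0.
Proof.
set B4 := (div_rows N r Y^T)^T - (D *m Z + Al).
have b4_fps : b4 = lift_mx B4.
  move: coef0_Y_head_proj => /coef0_cols_head_proj /div_cols_eps_diag Y_factor.
  by rewrite b4E -[Y in lift_mx Y *m _]Y_factor lift_mul_eps_diagK // lift_mxB.
exists B4; split => //; rewrite -unitmx_fpsE.
by apply: (@exact_order_unitmx _ _ 0); rewrite expr0z mulr1 -det_lift_mx -b4_fps.
Qed.

End Confinement.

Theorem theorem1 (N r m : nat) (alpha : 'M[C]_N) (Bm1 Bm : 'M[fps]_N) :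
  (1 <= r <= N)%N -> (2 <= m)%N ->
  (forall i j : 'I_N, (i < r)%N -> coef0_mx Bm i j = 0) ->
  exact_order (\det (lift_mx Bm)) r%:Z ->
  let b1 := dPI_next alpha m (lift_mx Bm1) (lift_mx Bm) in
  let b2 := dPI_next alpha m.+1 (lift_mx Bm) b1 in
  let b3 := dPI_next alpha m.+2 b1 b2 in
  let b4 := dPI_next alpha m.+3 b2 b3 in
  exact_order (\det b1) (- r%:Z) ->
  exact_order (\det b2) (- r%:Z) ->
  exact_order (\det b3) r%:Z ->
  exact_order (\det b4) 0 ->
  exists B4 : 'M[fps]_N, b4 = lift_mx B4 /\ \det (coef0_mx B4) != 0.
Proof.
move=> /andP[_ r_le_N] m_ge2 Bm_rows0 det_Bm b1 b2 b3 b4 det_b1 det_b2 det_b3 det_b4.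
exact: (dPI_confinement _ _ _ _ _ _ r_le_N (ltnW m_ge2) Bm_rows0 det_Bm
  det_b1 det_b2 det_b3 det_b4).
Qed.
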